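(* Let $(\mathfrak{g},[\cdot,\cdot]_{\mathfrak{g}},\phi_{\mathfrak{g}})$ be a Hom-Lie algebra and $(V,\beta,\rho)$ a representation. Then the semidirect product Hom-Lie algebra $\mathfrak g\ltimes_\rho V$ is weakly involutive if and only if (i) $\mathfrak g$ is weakly involutive; (ii) $(V,\beta,\rho)$ is weakly involutive; (iii) $\rho(x)\beta^2=\rho(x)$ for all $x\in\mathfrak g$.
   Context: A Hom-Lie algebra $(\mathfrak{h},[\cdot,\cdot]_{\mathfrak{h}},\phi_{\mathfrak{h}})$: skew-symmetric bilinear bracket and linear map with $\phi_{\mathfrak h}[x,y]=[\phi_{\mathfrak h}x,\phi_{\mathfrak h}y]$ and $[\phi_{\mathfrak h}(x),[y,z]]+[\phi_{\mathfrak h}(y),[z,x]]+[\phi_{\mathfrak h}(z),[x,y]]=0$; weakly involutive if $[\phi_{\mathfrak h}^2(x),y]=[x,y]$ for all $x,y$. A representation $(V,\beta,\rho)$ of $\mathfrak g$: $\beta\in\mathfrak{gl}(V)$, $\rho:\mathfrak g\to\mathfrak{gl}(V)$ with $\rho(\phi_{\mathfrak g}(x))\beta=\beta\rho(x)$ and $\rho([x,y]_{\mathfrak g})\beta=\rho(\phi_{\mathfrak g}(x))\rho(y)-\rho(\phi_{\mathfrak g}(y))\rho(x)$; weakly involutive if $\rho(\phi_{\mathfrak g}^2(x))=\rho(x)$ for all $x$. The semidirect product $\mathfrak g\ltimes_\rho V$ is $\mathfrak g\oplus V$ with bracket $[(x,u),(y,v)]=([x,y]_{\mathfrak g},\rho(x)v-\rho(y)u)$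 and twisting map $\phi_{\mathfrak g}\oplus\beta$. *)

From mathcomp Require Import all_boot all_algebra.
Set Implicit Arguments. Unset Strict Implicit. Unset Printing Implicit Defensive.
Import GRing.Theory.
Local Open Scope ring_scope.

Section HomLie.
Variables (K : fieldType) (G V : lmodType K).

Definition is_HomLie (br : G -> G -> G) (phi : G -> G) : Prop :=
  (forall x, linear (br x)) /\
  (forall y, linear (fun x => br x y)) /\
  (forall x y, br x y = - br y x) /\
  linear phi /\
  (forall x y, phi (br x y) = br (phi x) (phi y)) /\
  (forall x y z, br (phi x) (br y z) + br (phi y) (br z x)
                 + br (phi z) (br x y) = 0).

Definition HomLie_weakly_involutive (br : G -> G -> G) (phi : G -> G) : Prop :=
  forall x y, br (phi (phi x)) y = br x y.

Definition is_HomLie_rep (br : G -> G -> G) (phi : G -> G)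
  (beta : V -> V) (rho : G -> V -> V) : Prop :=
  [/\ linear beta,
      (forall x, linear (rho x)),
      (forall a x y, rho (a *: x + y) = (fun v => a *: rho x v + rho y v)),
      (forall x, rho (phi x) \o beta = beta \o rho x) &
      (forall x y, rho (br x y) \o beta
                   = (fun v => rho (phi x) (rho y v) - rho (phi y) (rho x v)))].

Definition rep_weakly_involutive (phi : G -> G) (rho : G -> V -> V) : Prop :=
  forall x, rho (phi (phi x)) = rho x.

Definition sd_br (br : G -> G -> G) (rho : G -> V -> V)
  (p q : G * V) : G * V :=
  (br p.1 q.1, rho p.1 q.2 - rho q.1 p.2).

Definition sd_phi (phi : G -> G) (beta : V -> V) (p : G * V) : G * V :=
  (phi p.1, beta p.2).

End HomLie.

(* Both components of [sd_br (sd_phi^2 (x, u)) (y, v)] are compared with those of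
   [sd_br (x, u) (y, v)]: the first gives weak involutivity of [g], and the second,
   [rho (phi^2 x) v - rho y (beta^2 u) = rho x v - rho y u], splits into (ii) and
   (iii) by taking [u = 0] or [x = 0], since [rho] vanishes on [0] in either argument. *)
From mathcomp Require Import all_boot all_algebra.
From Stdlib Require Import FunctionalExtensionality.
Local Open Scope ring_scope.
Import GRing.Theory.

Lemma linear_fun0 (K : pzRingType) (U W : lmodType K) (f : U -> W) :
  linear f -> f 0 = 0.
Proof. by move=> /zmod_morphism_linear fB; rewrite -[0 in LHS](subrr 0) fB subrr. Qed.

Section SemidirectProduct.
Variables (K : fieldType) (G V : lmodType K).
Variables (br : G -> G -> G) (phi : G -> G) (beta : V -> V) (rho : G -> V -> V).

Lemma HomLie_rep_beta0 : is_HomLie_rep br phi beta rho -> beta 0 = 0.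
Proof. by case=> /linear_fun0. Qed.

Lemma HomLie_rep0r : is_HomLie_rep br phi beta rho -> forall x, rho x 0 = 0.
Proof. by case=> _ rho_lin _ _ _ x; apply/linear_fun0/rho_lin. Qed.

Lemma HomLie_rep0l : is_HomLie_rep br phi beta rho -> forall v, rho 0 v = 0.
Proof.
case=> _ _ rho_lin _ _ v.
have := congr1 (fun f => f v) (rho_lin (-1) 0 0).
by rewrite /= scaler0 addr0 scaleN1r addNr.
Qed.

Hypotheses (rho0l : forall v, rho 0 v = 0) (rho0r : forall x, rho x 0 = 0).
Hypothesis beta0 : beta 0 = 0.

Lemma sd_weakly_involutiveP :
  HomLie_weakly_involutive (sd_br br rho) (sd_phi phi beta) <->
  [/\ HomLie_weakly_involutive br phi,
      rep_weakly_involutive phi rho &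
      (forall x, rho x \o beta \o beta = rho x)].
Proof.
rewrite /HomLie_weakly_involutive /sd_br /sd_phi /=; split.
- move=> sd_inv; split.
  + by move=> x y; have [] := sd_inv (x, 0) (y, 0).
  + move=> x; apply: functional_extensionality => v.
    have [_] := sd_inv (x, 0) (0, v).
    by rewrite beta0 !rho0l !subr0.
  + move=> y; apply: functional_extensionality => u /=.
    have [_] := sd_inv (0, u) (y, 0).
    by rewrite !rho0r !sub0r => /oppr_inj.
- case=> g_inv rho_inv beta2 [x u] [y v] /=.
  have beta2u : rho y (beta (beta u)) = rho y u := congr1 (fun f => f u) (beta2 y).
  by rewrite g_inv rho_inv beta2u.
Qed.

End SemidirectProduct.

Theorem proposition2p10 (K : fieldType) (G V : lmodType K)
  (br : G -> G -> G) (phi : G -> G) (beta : V -> V) (rho : G -> V -> V) :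
  is_HomLie br phi ->
  is_HomLie_rep br phi beta rho ->
  HomLie_weakly_involutive (sd_br br rho) (sd_phi phi beta) <->
  [/\ HomLie_weakly_involutive br phi,
      rep_weakly_involutive phi rho &
      (forall x, rho x \o beta \o beta = rho x)].
Proof.
move=> _ rep.
apply: sd_weakly_involutiveP.
- exact: HomLie_rep0l rep.
- exact: HomLie_rep0r rep.
- exact: HomLie_rep_beta0 rep.
Qed.
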